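(* Suppose $P_\mu$ is the Bernoulli distribution with mean $\mu$, and fix $\theta>2/3$. Then $q_\theta(\mu)\ge\exp(-0.5)/3$ for all $\mu\ge(1+\theta)/2$.
   Context: For $\mu>\theta$, with $X_1,X_2,\dots$ i.i.d. $\sim P_\mu$ and $M_n=\frac1n\sum_{i=1}^nX_i$, $q_\theta(\mu):=\mathbb{P}[M_n>\theta\text{ for all }n\ge1]$. *)

From HB Require Import structures.
From mathcomp Require Import all_boot all_order all_algebra.
From mathcomp Require Import all_classical all_reals all_analysis.
Set Implicit Arguments. Unset Strict Implicit. Unset Printing Implicit Defensive.
Import Order.TTheory GRing.Theory Num.Theory.
Import numFieldNormedType.Exports.
Local Open Scope classical_set_scope.
Local Open Scope ring_scope.

Definition mutually_independent d (T : measurableType d) (R : realType)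
    (P : probability T R) (X : nat -> {RV P >-> R}) : Prop :=
  forall (s : seq nat) (B : nat -> set R),
    uniq s -> (forall i, measurable (B i)) ->
    P (\big[setI/setT]_(i <- s) (X i @^-1` B i)) =
    (\prod_(i <- s) P (X i @^-1` B i))%E.

Definition bernoulli_rv d (T : measurableType d) (R : realType)
    (P : probability T R) (Y : {RV P >-> R}) (mu : R) : Prop :=
  P (Y @^-1` [set 1]) = mu%:E /\ P (Y @^-1` [set 0]) = (1 - mu)%:E.

(* M_n = (1/n) sum_{i=1}^n X_i, with X_1, X_2, ... indexed as X 0, X 1, ... *)
Definition running_mean d (T : measurableType d) (R : realType)
    (P : probability T R) (X : nat -> {RV P >-> R}) (n : nat) (w : T) : R :=
  (n%:R)^-1 * \sum_(i < n) X i w.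

Definition q_event d (T : measurableType d) (R : realType)
    (P : probability T R) (X : nat -> {RV P >-> R}) (theta : R) : set T :=
  [set w | forall n : nat, (0 < n)%N -> theta < running_mean X n w].

From HB Require Import structures.
From mathcomp Require Import all_boot all_order all_algebra.
From mathcomp Require Import all_classical all_reals all_analysis.
From mathcomp Require Import measurable_realfun ring lra.
Import Order.TTheory GRing.Theory Num.Theory.
Local Open Scope classical_set_scope.
Local Open Scope ring_scope.
Set Implicit Arguments. Unset Strict Implicit.

(* Let eps = 1 - theta.  If the first K bits are all 1, which has probability
   mu^K, the excess S_n - n theta of the partial sums reaches K eps.  From then
   on exp (- (S_n - n theta)) is a supermartingale, since 1 - mu <= eps / 2 and
   e <= 3, so the walk ever comes back to 0 with probability at most
   exp (- K eps).  Hence q_theta(mu) >= mu^K (1 - exp (- K eps)), and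
   K = floor (1 / (2 eps)) + 1 makes the first factor at least exp (- 1/2) and
   the second at least 1/3.  Probabilities of events depending on the first
   K + N bits are sums over cylinder sets, and N -> oo by continuity from above. *)

Fixpoint bitseqs (n : nat) : seq (seq bool) :=
  if n is n'.+1 then map (cons true) (bitseqs n') ++ map (cons false) (bitseqs n')
  else [:: [::]].

Lemma size_bitseqs n s : s \in bitseqs n -> size s = n.
Proof.
elim: n s => [|n IHn] s /=; first by rewrite inE => /eqP ->.
by rewrite mem_cat => /orP[] /mapP[t /IHn <- ->].
Qed.

Lemma uniq_bitseqs n : uniq (bitseqs n).
Proof.
elim: n => [|n IHn] //=; have cons_inj (b : bool) : injective (cons b) by move=> ? ? [].
rewrite cat_uniq !(map_inj_uniq (cons_inj _)) IHn andbT /=.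
by apply/hasPn => _ /mapP[t _ ->]; apply/mapP => -[].
Qed.

Section exp_bounds.
Variable R : realType.

(* [expR (- 1) = expR (- 1/8) ^+ 8 >= (7/8) ^+ 8 > 1/3] *)
Lemma expR1_le3 : expR (1 : R) <= 3.
Proof.
suff : 3^-1 <= expR (- 1 : R).
  by rewrite expRN lef_pV2 ?posrE ?expR_gt0.
have -> : (- 1 : R) = 8%:R * (- (1 / 8)) by rewrite mulrN mul1r mulfV.
rewrite expRM_natl; apply: le_trans (lerXn2r 8 _ _ (expR_ge1Dx _)) => //.
- by rewrite !exprS expr0; lra.
- by rewrite nnegrE; lra.
- by rewrite nnegrE expR_ge0.
Qed.

Lemma expR_subr_invr_le (x : R) : 0 < x -> expR (1 - x^-1) <= x.
Proof.
move=> x_gt0; have := expR_ge1Dx (x^-1 - 1).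
by rewrite addrC subrK -opprB expRN lef_pV2 ?posrE ?expR_gt0.
Qed.

End exp_bounds.

Section bit_walks.
Variable R : realType.
Implicit Types (mu th y : R) (s : seq bool).

Definition bit_weight mu (b : bool) : R := if b then mu else 1 - mu.

Definition seq_weight mu s : R := \prod_(b <- s) bit_weight mu b.

(* [y] is the excess [S_k - k th] of the sum [S_k] of the bits read so far. *)
Fixpoint walk_positive th y s : bool :=
  if s is b :: t then (0 < y + b%:R - th) && walk_positive th (y + b%:R - th) t
  else true.

Lemma seq_weight_cons mu b s :
  seq_weight mu (b :: s) = bit_weight mu b * seq_weight mu s.
Proof. by rewrite /seq_weight big_cons. Qed.

Lemma sum_seq_weight mu n : \sum_(s <- bitseqs n) seq_weight mu s = 1.
Proof.
elim: n => [|n IHn] /=; first by rewrite big_seq1 /seq_weight big_nil.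
rewrite big_cat !big_map !(eq_bigr _ (fun s _ => seq_weight_cons _ _ s)).
by rewrite -!mulr_sumr IHn /= !mulr1 addrC subrK.
Qed.

Lemma seq_weight_nseq_cat mu K s :
  seq_weight mu (nseq K true ++ s) = mu ^+ K * seq_weight mu s.
Proof. by elim: K => [|K IHK]; rewrite ?mul1r //= seq_weight_cons IHK exprS mulrA. Qed.

Lemma walk_positive_nseq_cat th y K s : th < 1 -> 0 <= y ->
  walk_positive th y (nseq K true ++ s) = walk_positive th (y + K%:R * (1 - th)) s.
Proof.
move=> th_lt1; elim: K y => [|K IHK] y y_ge0 /=; first by rewrite mul0r addr0.
have -> : 0 < y + 1 - th by lra.
by rewrite IHK; [congr walk_positive; rewrite mulrSr; ring | lra].
Qed.

Lemma walk_positive_partial_sums th y s : walk_positive th y s ->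
  forall n, (0 < n <= size s)%N -> n%:R * th < y + \sum_(i < n) (nth false s i)%:R.
Proof.
elim: s y => [|b s IHs] y /=; first by move=> _ [|n].
move=> /andP[step_pos walk_s] [|[|n]] //= n_le.
  by rewrite big_ord_recl big_ord0 addr0 mul1r; lra.
have := IHs _ walk_s n.+1 n_le.
rewrite [in X in _ -> X]big_ord_recl -[n.+2%:R]natr1 mulrDl mul1r.
under [in X in _ -> X]eq_bigr do rewrite lift0.
by rewrite /=; lra.
Qed.

Lemma bit_drift_le1 mu th : mu <= 1 -> 1 - mu <= (1 - th) / 2 ->
  mu * expR (th - 1) + (1 - mu) * expR th <= 1.
Proof.
move=> mu_le1 mu_close.
have -> : expR th = expR 1 / expR (1 - th) by rewrite -expRB opprB addrC subrK.
have -> : expR (th - 1) = (expR (1 - th))^-1 by rewrite -expRN opprB.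
have e_le3 := expR1_le3 R; have exp_eps := expR_ge1Dx (1 - th).
rewrite mulrA -mulrDl ler_pdivrMr ?expR_gt0 // mul1r; nra.
Qed.

(* Ville's maximal inequality for the supermartingale [expR (- y)]: by the drift
   hypothesis it does not grow in expectation, and it is at least 1 once the walk
   exits. *)
Lemma exit_weight_le mu th n y : 0 <= mu <= 1 ->
  mu * expR (th - 1) + (1 - mu) * expR th <= 1 ->
  \sum_(s <- bitseqs n | ~~ walk_positive th y s) seq_weight mu s <= expR (- y).
Proof.
move=> /andP[mu_ge0 mu_le1] drift; elim: n y => [|n IHn] y.
  by rewrite /= big_cons big_nil expR_ge0.
have step b :
    \sum_(s <- bitseqs n | ~~ walk_positive th y (b :: s)) seq_weight mu (b :: s)
    <= bit_weight mu b * expR (- (y + b%:R - th)).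
  rewrite (eq_bigr _ (fun s _ => seq_weight_cons _ _ s)) -mulr_sumr.
  apply: ler_wpM2l; first by case: b => /=; lra.
  have [step_pos|step_nonpos] := ltrP 0 (y + b%:R - th).
    rewrite (eq_bigl (fun s => ~~ walk_positive th (y + b%:R - th) s)) ?IHn // => s.
    by rewrite /= step_pos.
  rewrite (eq_bigl xpredT) => [|s]; last by rewrite /= ltNge step_nonpos.
  by rewrite sum_seq_weight -[X in X <= _]expR0 ler_expR oppr_ge0.
rewrite /= big_cat !big_map; apply: le_trans (lerD (step true) (step false)) _.
have expR_step b : expR (- (y + b%:R - th)) = expR (- y) * expR (th - b%:R).
  by rewrite -expRD; congr expR; ring.
rewrite !expR_step /= subr0 mulrCA [(1 - mu) * _]mulrCA -mulrDr.
by rewrite ler_piMr ?expR_ge0.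
Qed.

Lemma stay_weight_ge mu th n y : 0 <= mu <= 1 ->
  mu * expR (th - 1) + (1 - mu) * expR th <= 1 ->
  1 - expR (- y) <= \sum_(s <- bitseqs n | walk_positive th y s) seq_weight mu s.
Proof.
move=> mu01 drift; have := exit_weight_le n y mu01 drift.
have := sum_seq_weight mu n; rewrite (bigID (walk_positive th y)) /=; lra.
Qed.

End bit_walks.

(* [K] ones in a row lift the walk to height [K (1 - th) > 1/2]; this run has
   probability [mu ^+ K >= expR (- 1/2)] only because [th > 2/3]. *)
Lemma burn_in_exists (R : realType) (th mu : R) :
  2 / 3 < th -> th < 1 -> (1 + th) / 2 <= mu ->
  exists K : nat, expR (- (1 / 2)) / 3 <= mu ^+ K * (1 - expR (- (K%:R * (1 - th)))).
Proof.
move=> th_gt th_lt1 mu_ge; set eps := 1 - th; set x := (2 * eps)^-1.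
have eps_gt0 : 0 < eps by rewrite /eps; lra.
have x_eps : x * eps = 1 / 2 by rewrite /x; field; rewrite gt_eqF.
exists (Num.truncn x).+1; set K := (Num.truncn x).+1%:R.
have K_gt : 1 / 2 < K * eps by rewrite -x_eps ltr_pM2r // truncnS_gt.
have K_le : K * eps <= 1 / 2 + eps.
  rewrite -x_eps /K -natr1 mulrDl mul1r lerD2r ler_pM2r // truncn_le.
  by rewrite invr_ge0 mulr_ge0 // ltW.
have mu_gt0 : 0 < mu by lra.
have muK : expR (- (1 / 2)) <= mu ^+ (Num.truncn x).+1.
  apply: le_trans (lerXn2r _ _ _ (expR_subr_invr_le mu_gt0));
    rewrite ?nnegrE ?expR_ge0 ?(ltW mu_gt0) //.
  rewrite -expRM_natl -/K ler_expR.
  have -> : K * (1 - mu^-1) = - (K * (1 - mu)) / mu by field; rewrite gt_eqF.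
  rewrite mulNr lerN2 ler_pdivrMr //.
  have K_ge0 : 0 <= K by rewrite ler0n.
  rewrite /eps in K_le; nra.
have tail : 3^-1 <= 1 - expR (- (K * eps)).
  have exp_half : expR (- (1 / 2)) <= 2 / 3 :> R.
    rewrite expRN -[2 / 3]invf_div lef_pV2 ?posrE ?expR_gt0 //.
    by have := expR_ge1Dx (1 / 2 : R); lra.
  have : expR (- (K * eps)) <= expR (- (1 / 2)) by rewrite ler_expR lerN2 ltW.
  lra.
by apply: ler_pM; rewrite ?expR_ge0 ?invr_ge0.
Qed.

Lemma probability_bigcap_ge d (T : measurableType d) (R : realType)
    (P : probability T R) (F : nat -> set T) (c : \bar R) :
  (forall n, measurable (F n)) -> (forall n m, (n <= m)%N -> F m `<=` F n) ->
  (forall n, (c <= P (F n))%E) -> (c <= P (\bigcap_n F n))%E.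
Proof.
move=> mF F_noninc c_le.
have P_cvg : (P \o F) n @[n --> \oo] --> P (\bigcap_n F n).
  apply: nonincreasing_cvg_mu => //.
  - by rewrite (le_lt_trans (probability_le1 P (mF 0%N))) ?ltry.
  - exact: bigcapT_measurable.
  - by move=> n m n_le_m; apply/subsetPset/F_noninc.
rewrite -(cvg_lim _ P_cvg) //; apply: lime_ge; last exact: nearW.
by apply/cvg_ex; exists (P (\bigcap_n F n)).
Qed.

Section cylinders.
Context d (T : measurableType d) (R : realType) (P : probability T R).
Variables (X : nat -> {RV P >-> R}) (mu : R).

Definition cylinder (s : seq bool) : set T :=
  \bigcap_(i in `I_(size s)) X i @^-1` [set (nth false s i)%:R].

Lemma measurable_cylinder s : measurable (cylinder s).
Proof.
apply: bigcap_measurableType => i _; rewrite -[X in measurable X]setTI.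
by apply: measurable_funPT => //; exact: measurable_set1.
Qed.

Lemma cylinder_disjoint s t :
  size s = size t -> s != t -> cylinder s `&` cylinder t = set0.
Proof.
move=> size_st /negP neq_st; apply/seteqP; split => // w [in_s in_t]; apply: neq_st.
apply/eqP/(eq_from_nth (x0 := false) size_st) => i i_lt.
have := in_s i i_lt; rewrite /= (in_t i) -?size_st // => /eqP.
by rewrite eqr_nat; do 2 case: nth.
Qed.

Definition mean_above_upto th N : set T :=
  \bigcap_(n in [set n | (0 < n <= N)%N]) [set w | th < running_mean X n w].

Lemma measurable_mean_above_upto th N : measurable (mean_above_upto th N).
Proof.
apply: bigcap_measurableType => n _; rewrite -[X in measurable X]setTI -preimage_itvoy.
have mean_mfun : measurable_fun setT (running_mean X n).
  by apply: (measurableT_comp (mulrl_measurable n%:R^-1)); apply: measurable_sum.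
exact: mean_mfun.
Qed.

Lemma mean_above_upto_sub th N M :
  (N <= M)%N -> mean_above_upto th M `<=` mean_above_upto th N.
Proof.
move=> N_le_M w above n /andP[n_gt0 n_le]; apply: above.
by rewrite /= n_gt0 (leq_trans n_le N_le_M).
Qed.

Lemma cylinder_sub_mean_above th s :
  walk_positive th 0 s -> cylinder s `<=` mean_above_upto th (size s).
Proof.
move=> walk_s w in_cyl n /= n_bounds; have /andP[n_gt0 n_le] := n_bounds.
rewrite /running_mean (eq_bigr (fun i : 'I_n => (nth false s i)%:R)) => [|i _].
  by rewrite ltr_pdivlMl ?ltr0n // -[ltRHS]add0r walk_positive_partial_sums.
exact/in_cyl/(leq_trans (ltn_ord i)).
Qed.

Hypotheses (X_bernoulli : forall i, bernoulli_rv (X i) mu)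
  (X_indep : mutually_independent X).

Lemma probability_cylinder s : P (cylinder s) = (seq_weight mu s)%:E.
Proof.
have -> : cylinder s =
    \big[setI/setT]_(i <- iota 0 (size s)) X i @^-1` [set (nth false s i)%:R].
  rewrite -bigcap_seq; congr bigcap; apply/seteqP; split => i /=; rewrite mem_iota //.
rewrite X_indep ?iota_uniq //.
rewrite /seq_weight (big_nth false) -prodEFin /index_iota subn0; apply: eq_bigr => i _.
by have [P1 P0] := X_bernoulli i; case: nth.
Qed.

Lemma probability_bigcup_cylinders n (G : seq (seq bool)) :
  uniq G -> {in G, forall s, size s = n} ->
  P (\bigcup_(s in [set` G]) cylinder s) = (\sum_(s <- G) seq_weight mu s)%:E.
Proof.
move=> uniq_G size_G; rewrite measure_fin_bigcup //.
- by rewrite -fsbig_seq // -sumEFin; apply: eq_bigr => s _; exact: probability_cylinder.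
- exact: finite_seq.
- move=> s t /size_G size_s /size_G size_t [w in_st].
  have [//|neq_st] := eqVneq s t.
  by move: in_st; rewrite cylinder_disjoint ?size_s ?size_t.
- by move=> s _; exact: measurable_cylinder.
Qed.

Lemma mean_above_upto_ge th K N : th < 1 -> 0 <= mu <= 1 ->
  mu * expR (th - 1) + (1 - mu) * expR th <= 1 ->
  ((mu ^+ K * (1 - expR (- (K%:R * (1 - th)))))%:E <= P (mean_above_upto th (K + N)))%E.
Proof.
move=> th_lt1 mu01 drift.
pose G := [seq nseq K true ++ t | t <- bitseqs N & walk_positive th (K%:R * (1 - th)) t].
have G_in s : s \in G -> size s = (K + N)%N /\ walk_positive th 0 s.
  case/mapP => t; rewrite mem_filter => /andP[walk_t t_in] ->.
  by rewrite size_cat size_nseq (size_bitseqs t_in) walk_positive_nseq_cat // add0r.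
have uniq_G : uniq G.
  rewrite map_inj_uniq ?filter_uniq ?uniq_bitseqs // => a b /(congr1 (drop K)).
  by rewrite !drop_size_cat ?size_nseq.
have G_sub : \bigcup_(s in [set` G]) cylinder s `<=` mean_above_upto th (K + N).
  by move=> w [s /G_in[<- walk_s]]; exact: cylinder_sub_mean_above.
apply: (@le_trans _ _ (P (\bigcup_(s in [set` G]) cylinder s))); last first.
  apply: le_measure G_sub; rewrite inE; last exact: measurable_mean_above_upto.
  apply: fin_bigcup_measurable => [|s _]; first exact: finite_seq.
  exact: measurable_cylinder.
rewrite (probability_bigcup_cylinders uniq_G (fun s sG => proj1 (G_in s sG))).
rewrite lee_fin big_map big_filter.
under eq_bigr do rewrite seq_weight_nseq_cat.
rewrite -mulr_sumr; apply: ler_wpM2l; last exact: stay_weight_ge.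
by case/andP: mu01 => mu_ge0 _; exact: exprn_ge0.
Qed.

Lemma q_event_bigcap th : q_event X th = \bigcap_N mean_above_upto th N.
Proof.
apply/seteqP; split => w /= above; first by move=> N _ n /andP[n_gt0 _]; exact: above.
by move=> n n_gt0; apply: (above n I); rewrite /= n_gt0 leqnn.
Qed.

End cylinders.

Theorem lemma2 (R : realType) (d : measure_display) (T : measurableType d)
    (P : probability T R) (X : nat -> {RV P >-> R}) (theta mu : R) :
  2 / 3 < theta -> theta < mu -> mu <= 1 -> (1 + theta) / 2 <= mu ->
  (forall i, bernoulli_rv (X i) mu) -> mutually_independent X ->
  ((expR (- (1 / 2)) / 3)%:E <= P (q_event X theta))%E.
Proof.
move=> theta_gt theta_lt_mu mu_le1 mu_ge X_bernoulli X_indep.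
have theta_lt1 : theta < 1 by lra.
have mu01 : 0 <= mu <= 1 by apply/andP; split; lra.
have drift : mu * expR (theta - 1) + (1 - mu) * expR theta <= 1.
  by apply: bit_drift_le1 => //; lra.
have [K K_bound] := burn_in_exists theta_gt theta_lt1 mu_ge.
rewrite q_event_bigcap; apply: probability_bigcap_ge => [N|N M|N].
- exact: measurable_mean_above_upto.
- exact: mean_above_upto_sub.
apply: (@le_trans _ _ (P (mean_above_upto X theta (K + N)))).
  apply: le_trans (mean_above_upto_ge X_bernoulli X_indep K N theta_lt1 mu01 drift).
  by rewrite lee_fin.
apply: le_measure; rewrite ?inE; try exact: measurable_mean_above_upto.
exact/mean_above_upto_sub/leq_addl.
Qed.
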